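(* For complex parameters $x_0,x_1,y_0,y_1,y_2\in\mathbb{C}$, consider the polynomial \[ p(x,y)(s) = (s^4+2s^2)(x_0+x_1 s+s^2)+y_0+y_1 s+y_2 s^2 \] in the complex indeterminate $s$, and let \[ x_0^*=7,\quad x_1^* = \tfrac{6\sqrt{15}}{5},\quad y_0^* = \tfrac{27}{125},\quad y_1^* = \tfrac{54\sqrt{15}}{125},\quad y_2^*= -\tfrac{43}{5}. \] Then the abscissa $\alpha(p(x,y))$, viewed as a function of $(x_0,x_1,y_0,y_1,y_2)\in\mathbb{C}^5$, is locally minimized at $(x_0^*,x_1^*,y_0^*,y_1^*,y_2^* )$. Furthermore, there is a positive constant $\tau$ such that for all $(x_0,x_1,y_0,y_1,y_2)$ sufficiently close to $(x_0^*,x_1^*,y_0^*,y_1^*,y_2^* )$, \[ \alpha(p(x,y)) \geq \alpha(p(x^*,y^* )) + \tau \|d\|, \] where $d = [x_0 - x_0^*,\ x_1 - x_1^*,\ y_0 - y_0^*,\ y_1 - y_1^*,\ y_2 - y_2^*]\in\mathbb{C}^5$.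
   Context: For a polynomial $q$ with complex coefficients, its abscissa is $\alpha(q)=\max\{\Re z : q(z)=0\}$. Here $x(s)=x_0+x_1s+s^2$ and $y(s)=y_0+y_1s+y_2s^2$, and $p(x^*,y^* )$ denotes $p$ evaluated at the starred coefficients. $\|\cdot\|$ denotes the Euclidean norm on $\mathbb{C}^5$. *)

From HB Require Import structures.
From mathcomp Require Import all_boot all_order all_algebra.
From mathcomp Require Import boolp classical_sets reals.
From mathcomp.real_closed Require Import complex.
Set Implicit Arguments. Unset Strict Implicit. Unset Printing Implicit Defensive.
Import Order.TTheory GRing.Theory Num.Theory.
Local Open Scope ring_scope.
Local Open Scope classical_set_scope.
Local Open Scope complex_scope.

Definition abscissa (R : realType) (q : {poly R[i]}) : R :=
  sup [set complex.Re z | z in [set z : R[i] | root q z]].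

Definition pxy (R : realType) (x0 x1 y0 y1 y2 : R[i]) : {poly R[i]} :=
  ('X^4 + 2%:R *: 'X^2) * (x0%:P + x1 *: 'X + 'X^2)
  + (y0%:P + y1 *: 'X + y2 *: 'X^2).

Definition sqmod (R : realType) (z : R[i]) : R :=
  complex.Re z ^+ 2 + complex.Im z ^+ 2.
Definition norm5 (R : realType) (a b c d e : R[i]) : R :=
  Num.sqrt (sqmod a + sqmod b + sqmod c + sqmod d + sqmod e).

Definition x0s (R : realType) : R[i] := (7%:R)%:C.
Definition x1s (R : realType) : R[i] := (6%:R * Num.sqrt 15%:R / 5%:R)%:C.
Definition y0s (R : realType) : R[i] := (27%:R / 125%:R)%:C.
Definition y1s (R : realType) : R[i] := (54%:R * Num.sqrt 15%:R / 125%:R)%:C.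
Definition y2s (R : realType) : R[i] := (- (43%:R / 5%:R))%:C.

(* At the optimum the polynomial is (s + rho)^6 with rho = sqrt 15 / 5, so its
   abscissa is -rho.  Shift the variable by rho: for parameters near the optimum
   the roots t_i of q(w) = p(w - rho) are small (Cauchy's bound), and the
   coefficients of q are linear in the deviation d and determine it, subject to
   one linear relation, coming from the fact that the s^3 coefficient 2 x1 of p
   is twice its s^5 coefficient x1.  Written with the power sums of the t_i, the
   real part of that relation is
     8 sum Re t_i = 4 rho sum (Im t_i ^2 - Re t_i ^2) + (higher-order terms),
   so if every Re t_i <= beta := alpha(p) + rho then sum |t_i|^2 = O(beta).
   Every coefficient of q, hence d, is O(sum |t_i|^2), whence |d| = O(beta):
   the abscissa grows at least linearly away from the optimum. *)

From HB Require Import structures.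
From mathcomp Require Import all_boot all_order all_algebra.
From mathcomp Require Import boolp classical_sets reals.
From mathcomp.real_closed Require Import complex.
From mathcomp Require Import ring lra.
Import Order.TTheory GRing.Theory Num.Theory Normc.
Local Open Scope ring_scope.
Local Open Scope complex_scope.
Local Open Scope classical_set_scope.

Section ComplexModulus.
Context {R : realType}.
Implicit Types (a b c d e z w : R[i]).

Lemma normc_ge0 z : 0 <= normc z.
Proof. by case: z => a b; apply: sqrtr_ge0. Qed.

Lemma sqr_normcE z : normc z ^+ 2 = complex.Re z ^+ 2 + complex.Im z ^+ 2.
Proof. by case: z => a b /=; rewrite sqr_sqrtr // addr_ge0 ?sqr_ge0. Qed.

Lemma sqmod_normc z : sqmod z = normc z ^+ 2.
Proof. by rewrite sqr_normcE. Qed.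

Lemma normcX z n : normc (z ^+ n) = normc z ^+ n.
Proof. by elim: n => [|n IH]; rewrite ?normc1 // !exprS normcM IH. Qed.

Lemma normc_real (x : R) : normc x%:C = `|x|.
Proof. by rewrite /= expr0n addr0 sqrtr_sqr. Qed.

Lemma normc_nat n : normc n%:R = n%:R :> R.
Proof. by rewrite -(rmorph_nat (real_complex R)) normc_real ger0_norm. Qed.

Lemma Re_le_normc z : `|complex.Re z| <= normc z.
Proof. by case: z => a b /=; rewrite -sqrtr_sqr ler_wsqrtr // lerDl sqr_ge0. Qed.

Lemma normc_sum_le (I : Type) (s : seq I) (F : I -> R[i]) :
  normc (\sum_(i <- s) F i) <= \sum_(i <- s) normc (F i).
Proof.
apply: (big_ind2 (fun z x => normc z <= x)) => [|z1 x1 z2 x2 h1 h2|//].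
  by rewrite normc0.
exact: le_trans (le_normcD _ _) (lerD h1 h2).
Qed.

Lemma normcD_le z w (x y : R) : normc z <= x -> normc w <= y -> normc (z + w) <= x + y.
Proof. by move=> hz hw; apply: le_trans (le_normcD _ _) (lerD hz hw). Qed.

Lemma normcN_le z (x : R) : normc z <= x -> normc (- z) <= x.
Proof. by rewrite normcN. Qed.

Lemma normcM_le z w (x y : R) : normc z <= x -> normc w <= y -> normc (z * w) <= x * y.
Proof. by move=> hz hw; rewrite normcM; apply: ler_pM => //; apply: normc_ge0. Qed.

Lemma Re_sum (I : Type) (s : seq I) (F : I -> R[i]) :
  complex.Re (\sum_(i <- s) F i) = \sum_(i <- s) complex.Re (F i).
Proof. by apply: (big_morph (@complex.Re R)) => // -[a b] [c d]. Qed.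

Lemma Re_sqr z : complex.Re (z ^+ 2) = complex.Re z ^+ 2 - complex.Im z ^+ 2.
Proof. by case: z => a b; rewrite !expr2 /=; ring. Qed.

Lemma Re_realM (x : R) z : complex.Re (x%:C * z) = x * complex.Re z.
Proof. by case: z => a b /=; ring. Qed.

Lemma Re_natM n z : complex.Re (n%:R * z) = n%:R * complex.Re z.
Proof. by rewrite -(rmorph_nat (real_complex R) n) Re_realM. Qed.

Lemma norm5_ge a b c d e :
  [/\ normc a <= norm5 a b c d e, normc b <= norm5 a b c d e, normc c <= norm5 a b c d e,
      normc d <= norm5 a b c d e & normc e <= norm5 a b c d e].
Proof.
have le_sqrt (x y : R) : 0 <= x -> x ^+ 2 <= y -> x <= Num.sqrt y.
  by move=> x0 xy; rewrite -(ger0_norm x0) -sqrtr_sqr ler_wsqrtr.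
rewrite /norm5 !sqmod_normc.
have := sqr_ge0 (normc a); have := sqr_ge0 (normc b); have := sqr_ge0 (normc c).
have := sqr_ge0 (normc d); have := sqr_ge0 (normc e) => *.
by split; apply: le_sqrt; rewrite ?normc_ge0 //; lra.
Qed.

Lemma norm5_le a b c d e :
  norm5 a b c d e <= normc a + normc b + normc c + normc d + normc e.
Proof.
rewrite /norm5 !sqmod_normc.
have := normc_ge0 a; have := normc_ge0 b; have := normc_ge0 c.
have := normc_ge0 d; have := normc_ge0 e => *.
by rewrite -[X in _ <= X]ger0_norm ?addr_ge0 // -sqrtr_sqr ler_wsqrtr //; nra.
Qed.

End ComplexModulus.

Ltac normc_bound := lazymatch goal with
  | |- is_true (normc (_ + _) <= _) => apply: normcD_le; normc_bound
  | |- is_true (normc (- _) <= _) => apply: normcN_le; normc_bound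
  | |- is_true (normc (_ * _) <= _) => apply: normcM_le; normc_bound
  | |- _ => first [eassumption | apply: lexx] end.

Ltac normc_sum_bound := lazymatch goal with
  | |- is_true (_ + _ <= _) => apply: lerD; normc_sum_bound
  | |- is_true (normc _ <= _) => normc_bound
  | |- _ => apply: lexx end.

Lemma coef_prod_XsubC_subn2 {F : comNzRingType} (s : seq F) : (1 < size s)%N ->
  (\prod_(t <- s) ('X - t%:P))`_(size s).-2 *+ 2
    = (\sum_(t <- s) t) ^+ 2 - \sum_(t <- s) t ^+ 2.
Proof.
elim: s => [|a s IH] //= s_gt1; rewrite !big_cons mulrBl coefB coefXM coefCM.
case: s s_gt1 IH => [|b [|c s]] // _ IH.
  by rewrite !big_seq1 /= coefB coefC coefX /=; ring.
have := @coefPn_prod_XsubC _ (b :: c :: s) isT; rewrite /= => ->.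
by rewrite mulrnBl IH //; ring.
Qed.

Lemma sqr_sum_le_size {F : realFieldType} {I : Type} (s : seq I) (f : I -> F) :
  (\sum_(i <- s) f i) ^+ 2 <= (size s)%:R * \sum_(i <- s) f i ^+ 2.
Proof.
elim: s => [|a s IH]; first by rewrite !big_nil expr0n mul0r.
rewrite !big_cons /= -natr1.
have Q0 : 0 <= \sum_(i <- s) f i ^+ 2 by apply: sumr_ge0 => i _; apply: sqr_ge0.
move: IH Q0 (ler0n F (size s)).
move: (f a) (\sum_(i <- s) f i) (\sum_(i <- s) f i ^+ 2) (size s)%:R => x S Q m IH Q0 m0.
suff cross : 2 * x * S <= m * x ^+ 2 + Q by nra.
have [m_eq0|m_neq0] := eqVneq m 0.
  have S0 : S = 0.
    by apply/eqP; rewrite -sqrf_eq0 eq_le sqr_ge0 andbT; move: IH; rewrite m_eq0 mul0r.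
  by rewrite S0 m_eq0 mulr0 mul0r add0r.
rewrite -(ler_pM2l (_ : 0 < m)); last by rewrite lt0r m_neq0.
by have := sqr_ge0 (m * x - S); nra.
Qed.

Section ComplexPolynomials.
Context {R : realType}.
Local Notation C := R[i].
Implicit Types (p q : {poly C}) (s : seq C).

Lemma normc_coef_prod_XsubC s k :
  normc (\prod_(t <- s) ('X - t%:P))`_k <= (\sum_(t <- s) normc t) ^+ (size s - k).
Proof.
elim: s k => [|a s IH] k.
  by rewrite !big_nil coef1; case: k => [|k]; rewrite ?eqxx ?normc1 // -[(_ == _)%:R]/0 normc0.
rewrite !big_cons mulrBl coefB coefXM coefCM /=.
set q := \prod_(t <- s) _; set S := \sum_(t <- s) _.
have S0 : 0 <= S by apply: sumr_ge0 => t _; apply: normc_ge0.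
have a0 := normc_ge0 a.
have le_aS j : S ^+ j.+1 + normc a * S ^+ j <= (normc a + S) ^+ j.+1.
  rewrite exprS [_ ^+ j.+1]exprS -mulrDl addrC.
  by apply: ler_wpM2l; [apply: addr_ge0 | apply: lerXn2r; rewrite ?nnegrE ?addr_ge0 ?lerDr].
case: k => [|k] /=.
  rewrite sub0r normcN normcM subn0.
  apply: le_trans (ler_wpM2l a0 (IH 0%N)) _; rewrite subn0.
  by apply: le_trans (le_aS _); rewrite lerDr exprn_ge0.
rewrite subSS; case: (ltnP k (size s)) => [lt_ks|le_sk].
  have := IH k; rewrite -(subnSK lt_ks) => IHk.
  apply: le_trans (le_aS _).
  by apply: normcD_le IHk _; apply: normcN_le; apply: normcM_le (lexx _) (IH _).
have q_k1 : q`_k.+1 = 0 by rewrite nth_default // size_prod_XsubC.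
have sk0 : (size s - k = 0)%N by apply/eqP; rewrite subn_eq0.
by have := IH k; rewrite q_k1 mulr0 subr0 sk0.
Qed.

Lemma normc_root_le q n (eps : R) w :
  q \is monic -> size q = n.+1 -> 0 <= eps <= 1 ->
  \sum_(i < n) normc q`_i <= eps ^+ n -> root q w -> normc w <= eps.
Proof.
move=> /monicP lead_q size_q /andP[eps0 eps1] small /rootP.
have q_n : q`_n = 1 by rewrite -lead_q lead_coefE size_q.
rewrite horner_coef size_q big_ord_recr /= q_n mul1r addrC.
move=> /eqP; rewrite addr_eq0 => /eqP wn.
have [n0|n_gt0] := posnP n.
  by move: wn; rewrite n0 big_ord0 expr0 oppr0 => /eqP; rewrite oner_eq0.
set W := normc w; have W0 : 0 <= W by apply: normc_ge0.
have Wn : W ^+ n <= \sum_(i < n) normc q`_i * W ^+ i.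
  rewrite -normcX wn normcN; apply: le_trans (normc_sum_le _ _ _) _.
  by apply: ler_sum => i _; rewrite normcM normcX.
have [W1|W1] := lerP W 1.
  rewrite -(ler_pXn2r n_gt0) ?nnegrE //; apply: le_trans Wn (le_trans _ small).
  by apply: ler_sum => i _; rewrite ler_piMr ?normc_ge0 // exprn_ile1.
have Wpos : 0 < W ^+ n.-1 by rewrite exprn_gt0 // (lt_trans ltr01).
have W_le : W <= \sum_(i < n) normc q`_i.
  rewrite -(ler_pM2r Wpos) -exprS prednK // mulr_suml.
  apply: le_trans Wn _; apply: ler_sum => i _.
  by rewrite ler_wpM2l ?normc_ge0 // ler_weXn2l ?ltW // -ltnS prednK.
have := le_trans W_le (le_trans small (exprn_ile1 _ eps0 eps1)).
by rewrite leNgt W1.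
Qed.

Lemma Re_le_abscissa p z : p != 0 -> root p z -> complex.Re z <= abscissa p.
Proof.
move=> p_neq0 pz; apply: ub_le_sup; last by exists z.
have [rs p_eq] := closed_field_poly_normal p.
have lc_neq0 : lead_coef p != 0 by rewrite lead_coef_eq0.
exists (\sum_(y <- rs) `|complex.Re y|) => _ [y py <-].
have y_rs : y \in rs by move: py; rewrite /= p_eq rootZ // root_prod_XsubC.
rewrite (big_rem y y_rs) /=; apply: le_trans (ler_norm _) _.
by rewrite lerDl sumr_ge0.
Qed.

Lemma abscissa_XsubC_exp (a : C) n : abscissa (('X - a%:P) ^+ n.+1) = complex.Re a.
Proof.
rewrite /abscissa.
have -> : [set complex.Re z | z in [set z | root (('X - a%:P) ^+ n.+1) z]]
    = [set complex.Re a].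
  apply/seteqP; split => [_ [z /= + <-]|_ ->]; first by rewrite root_exp_XsubC => /eqP ->.
  by exists a; rewrite //= root_exp_XsubC.
exact: sup1.
Qed.

End ComplexPolynomials.

Section SmallRoots.
Context {R : realType}.
Local Notation C := R[i].

Lemma small_sqr_Re_le (t : C) (b : R) :
  100%:R * normc t <= 1 -> complex.Re t <= b -> 0 <= b ->
  100%:R * complex.Re t ^+ 2 <= 2%:R * b - complex.Re t.
Proof.
move=> t_small t_b b0; have := Re_le_normc t.
rewrite -[complex.Re t ^+ 2]real_normK ?num_real //.
have := normr_ge0 (complex.Re t); case: (lerP 0 (complex.Re t)) => [Re_ge0|Re_lt0];
  [rewrite ger0_norm // | rewrite ltr0_norm //]; nra.
Qed.

Context {r beta : R} {ts : seq C}.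
Hypothesis r_bounds : 3%:R / 4%:R <= r <= 4%:R / 5%:R.
Hypothesis size_ts : size ts = 6%N.
Hypothesis ts_small : {in ts, forall t, 100%:R * normc t <= 1}.
Hypothesis ts_Re : {in ts, forall t, complex.Re t <= beta}.
Local Notation q := (\prod_(t <- ts) ('X - t%:P)).
Hypothesis q_constraint : q`_3 + 4%:R * r%:C * q`_4 + 4%:R * q`_5 = 0.
Local Notation S := (\sum_(t <- ts) normc t).
Local Notation T := (\sum_(t <- ts) normc t ^+ 2).
Local Notation e1 := (\sum_(t <- ts) t).
Local Notation P2 := (\sum_(t <- ts) t ^+ 2).

Let sum_const (x : R) : \sum_(t <- ts) x = 6%:R * x.
Proof. by rewrite big_const_seq count_predT iter_addr_0 size_ts mulr_natl. Qed.

Let S_ge0 : 0 <= S.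
Proof. by apply: sumr_ge0 => t _; apply: normc_ge0. Qed.

Let T_ge0 : 0 <= T.
Proof. by apply: sumr_ge0 => t _; apply: sqr_ge0. Qed.

Let S_small : S <= 6%:R / 100%:R.
Proof.
apply: (@le_trans _ _ (\sum_(t <- ts) 100%:R^-1)); last by rewrite sum_const.
rewrite big_seq [X in _ <= X]big_seq.
by apply: ler_sum => t /ts_small; lra.
Qed.

Let sqr_S_le : S ^+ 2 <= 6%:R * T.
Proof. by have := sqr_sum_le_size ts (@normc R); rewrite size_ts. Qed.

Lemma small_roots_coef_le i : (i <= 4)%N -> normc q`_i <= 6%:R * T.
Proof.
move=> le_i4; apply: le_trans (normc_coef_prod_XsubC _ _) _.
apply: le_trans sqr_S_le; rewrite size_ts.
apply: ler_wiXn2l => //; first by apply: le_trans S_small _; lra.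
by move: le_i4; case: i => [|[|[|[|[|]]]]].
Qed.

Let coef3_le : normc q`_3 <= 36%:R / 100%:R * T.
Proof.
apply: le_trans (normc_coef_prod_XsubC _ _) _; rewrite size_ts exprS.
apply: le_trans (ler_wpM2r (sqr_ge0 _) S_small) _.
by have := sqr_S_le; lra.
Qed.

Let q5E : q`_5 = - e1.
Proof. by have := @coefPn_prod_XsubC _ ts; rewrite size_ts => ->. Qed.

Let newton_constraint : 8%:R * e1 = 2%:R * q`_3 + (4%:R * r)%:C * (e1 ^+ 2 - P2).
Proof.
have q4E : q`_4 *+ 2 = e1 ^+ 2 - P2.
  by have := coef_prod_XsubC_subn2 ts; rewrite size_ts => ->.
rewrite -q4E rmorphM /= rmorph_nat; apply/eqP; rewrite -subr_eq0; apply/eqP.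
have := q_constraint; rewrite q5E => constraint.
transitivity (- 2%:R * (q`_3 + 4%:R * r%:C * q`_4 + 4%:R * - e1)); first by ring.
by rewrite constraint mulr0.
Qed.

Let e1_le : normc e1 <= S.
Proof. exact: normc_sum_le. Qed.

Lemma small_roots_coef5_le : normc q`_5 <= T.
Proof.
rewrite q5E normcN.
have P2_le : normc P2 <= T.
  by apply: le_trans (normc_sum_le _ _ _) _; under eq_bigr do rewrite normcX.
have := congr1 (@normc R) newton_constraint; rewrite normcM normc_nat => e1E.
have : 8%:R * normc e1 <= 2%:R * normc q`_3 + 4%:R * r * (normc e1 ^+ 2 + T).
  rewrite e1E; apply: normcD_le; first by rewrite normcM normc_nat.
  rewrite normcM normc_real ger0_norm; last by have := r_bounds; lra.
  apply: ler_wpM2l; first by have := r_bounds; lra.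
  by apply: normcD_le; rewrite ?normcN ?normcX.
have := coef3_le; have := e1_le; have := S_small; have := normc_ge0 e1.
by have := r_bounds; have := T_ge0; nra.
Qed.

Lemma small_roots_sqnorm_le : T <= 25%:R * beta.
Proof.
have := congr1 (@complex.Re R) newton_constraint.
have ReP2 : complex.Re P2
    = \sum_(t <- ts) complex.Re t ^+ 2 - \sum_(t <- ts) complex.Im t ^+ 2.
  by rewrite Re_sum -sumrB; apply: eq_bigr => t _; apply: Re_sqr.
rewrite raddfD /= !Re_natM Re_realM raddfB /= ReP2.
set A := complex.Re e1; set SA := \sum_(t <- ts) complex.Re t ^+ 2.
set SB := \sum_(t <- ts) complex.Im t ^+ 2 => identity.
have T_split : T = SA + SB.
  by rewrite /SA /SB -big_split; apply: eq_bigr => t _; rewrite sqr_normcE.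
have A_le : A <= 6%:R * beta.
  rewrite /A Re_sum -sum_const big_seq [X in _ <= X]big_seq.
  by apply: ler_sum => t /ts_Re.
have SA_le b : beta <= b -> 0 <= b -> 100%:R * SA <= 12%:R * b - A.
  move=> beta_b b0; rewrite /A Re_sum mulr_sumr.
  rewrite (_ : 12%:R * b = \sum_(t <- ts) 2%:R * b); last by rewrite sum_const; ring.
  rewrite -sumrB big_seq [X in _ <= X]big_seq; apply: ler_sum => t t_ts.
  by apply: small_sqr_Re_le => //; [apply: ts_small | apply: le_trans (ts_Re _ t_ts) beta_b].
have Re_q3 : - (36%:R / 100%:R * T) <= complex.Re q`_3.
  by have := Re_le_normc q`_3; rewrite ler_norml => /andP[+ _]; have := coef3_le; lra.
have Re_e1sq : - normc e1 ^+ 2 <= complex.Re (e1 ^+ 2).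
  by have := Re_le_normc (e1 ^+ 2); rewrite normcX ler_norml => /andP[].
have e1_sq : normc e1 ^+ 2 <= 6%:R / 100%:R * T.
  have := small_roots_coef5_le; rewrite q5E normcN => e1T.
  by have := S_small; have := e1_le; have := normc_ge0 e1; nra.
have SA0 : 0 <= SA by apply: sumr_ge0 => t _; apply: sqr_ge0.
have SB0 : 0 <= SB by apply: sumr_ge0 => t _; apply: sqr_ge0.
have := r_bounds; rewrite T_split in e1_sq Re_q3 * => /andP[r_lb r_ub].
have rSB : 3%:R / 4%:R * SB <= r * SB by apply: ler_wpM2r.
have rSA : r * SA <= 4%:R / 5%:R * SA by apply: ler_wpM2r.
have rRe_e1sq : - (4%:R / 5%:R * normc e1 ^+ 2) <= r * complex.Re (e1 ^+ 2).
  by have := normc_ge0 e1; nra.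
have [beta0|beta_neg] := lerP 0 beta.
  by have := SA_le beta (lexx _) beta0; lra.
by have := SA_le 0 (ltW beta_neg) (lexx _); lra.
Qed.

End SmallRoots.

Section Optimum.
Context {R : realType}.
Local Notation C := R[i].

Definition rho : R := Num.sqrt 15%:R / 5%:R.
Local Notation rc := (rho%:C).

Lemma rho_gt0 : 0 < rho.
Proof. by rewrite divr_gt0 // sqrtr_gt0 ltr0n. Qed.

Lemma sqr_rho : rho ^+ 2 = 3%:R / 5%:R.
Proof. by rewrite expr_div_n sqr_sqrtr ?ler0n //; field. Qed.

Lemma rho_bounds : 3%:R / 4%:R <= rho <= 4%:R / 5%:R.
Proof. by apply/andP; split; have := sqr_rho; have := rho_gt0; nra. Qed.

Lemma rcX n : rc ^+ n = (rho ^+ n)%:C.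
Proof. by rewrite rmorphXn. Qed.

Lemma natC n : (n%:R : R)%:C = n%:R.
Proof. by rewrite rmorph_nat. Qed.

Lemma sqr_rc : rc ^+ 2 = 3%:R / 5%:R.
Proof. by rewrite rcX sqr_rho rmorphM /= fmorphV /= !natC. Qed.

Lemma star_coefsE :
  [/\ x0s R = 7%:R, x1s R = 6%:R * rc, y0s R = rc ^+ 6,
      y1s R = 6%:R * rc ^+ 5 & y2s R = 15%:R * rc ^+ 4 - 14%:R].
Proof.
have s15 : Num.sqrt 15%:R = 5%:R * rho :> R by rewrite /rho; field.
have r4 : rho ^+ 4 = 9%:R / 25%:R by rewrite (_ : 4 = 2 * 2)%N // exprM sqr_rho; field.
have r5 : rho ^+ 5 = 9%:R / 25%:R * rho by rewrite exprS r4 mulrC.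
have r6 : rho ^+ 6 = 27%:R / 125%:R by rewrite (_ : 6 = 2 * 3)%N // exprM sqr_rho; field.
rewrite /x0s /x1s /y0s /y1s /y2s !rcX -!natC -!rmorphM -!rmorphB.
by split; congr (_%:C); rewrite ?s15 ?r5 ?r4 ?r6; field.
Qed.

Lemma pxy_star : pxy (x0s R) (x1s R) (y0s R) (y1s R) (y2s R) = ('X + rc%:P) ^+ 6.
Proof.
have [-> -> -> -> ->] := star_coefsE.
have e2 : 15%:R * rc ^+ 2 - 9%:R = 0 by rewrite sqr_rc; field.
have e3 : 20%:R * rc ^+ 3 - 12%:R * rc = 0 by rewrite exprS sqr_rc; field.
transitivity (pxy 7%:R (6%:R * rc) (rc ^+ 6) (6%:R * rc ^+ 5) (15%:R * rc ^+ 4 - 14%:R)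
  + (15%:R * rc ^+ 2 - 9%:R)%:P * 'X^4 + (20%:R * rc ^+ 3 - 12%:R * rc)%:P * 'X^3).
  by rewrite e2 e3 !mul0r !addr0.
rewrite /pxy -!mul_polyC; ring.
Qed.

Lemma abscissa_star : abscissa (pxy (x0s R) (x1s R) (y0s R) (y1s R) (y2s R)) = - rho.
Proof. by rewrite pxy_star -[rc]opprK polyCN abscissa_XsubC_exp. Qed.

(* The coefficients of [X^6 + delta(X - rho)], where
   [delta = (X^4 + 2 X^2) (d1 + d2 X) + d3 + d4 X + d5 X^2] is the change of
   [pxy] when its parameters move from the optimum by [d]. *)
Definition shifted_coefs (d1 d2 d3 d4 d5 : C) : seq C :=
  [:: d1 * (rc ^+ 4 + 2%:R * rc ^+ 2) - d2 * (rc ^+ 5 + 2%:R * rc ^+ 3) + d3 - rc * d4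
        + rc ^+ 2 * d5;
      - d1 * (4%:R * rc ^+ 3 + 4%:R * rc) + d2 * (5%:R * rc ^+ 4 + 6%:R * rc ^+ 2) + d4
        - 2%:R * rc * d5;
      d1 * (6%:R * rc ^+ 2 + 2%:R) - d2 * (10%:R * rc ^+ 3 + 6%:R * rc) + d5;
      d2 * (10%:R * rc ^+ 2 + 2%:R) - 4%:R * rc * d1;
      d1 - 5%:R * rc * d2;
      d2;
      1].

Lemma pxy_shift (d1 d2 d3 d4 d5 : C) :
  pxy (x0s R + d1) (x1s R + d2) (y0s R + d3) (y1s R + d4) (y2s R + d5) \Po ('X - rc%:P)
  = Poly (shifted_coefs d1 d2 d3 d4 d5).
Proof.
have -> : pxy (x0s R + d1) (x1s R + d2) (y0s R + d3) (y1s R + d4) (y2s R + d5)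
    = pxy (x0s R) (x1s R) (y0s R) (y1s R) (y2s R)
      + ('X^4 + 2%:R *: 'X^2) * (d1%:P + d2 *: 'X) + (d3%:P + d4 *: 'X + d5 *: 'X^2).
  by rewrite /pxy -!mul_polyC !polyCD; ring.
rewrite pxy_star !comp_polyD !comp_polyM !comp_polyD !comp_polyZ !rmorphXn /=.
rewrite !comp_polyX !comp_polyC subrK /= !cons_poly_def -!mul_polyC; ring.
Qed.

(* The s^3 coefficient of [pxy] is twice its s^5 coefficient. *)
Lemma shifted_coefs_constraint (d1 d2 d3 d4 d5 : C) :
  let c := shifted_coefs d1 d2 d3 d4 d5 in
  c`_3 + 4%:R * rc * c`_4 + 4%:R * c`_5 = 0.
Proof.
have e : 10%:R * rc ^+ 2 = 6%:R by rewrite sqr_rc; field.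
rewrite /=; transitivity (d2 * (6%:R - 10%:R * rc ^+ 2)); first by ring.
by rewrite e subrr mulr0.
Qed.

Lemma normc_rcX_le1 n : normc (rc ^+ n) <= 1.
Proof.
have rho_le1 : rho <= 1 by have := sqr_rho; have := rho_gt0; nra.
by rewrite normcX normc_real ger0_norm ?exprn_ile1 // ltW // rho_gt0.
Qed.

Lemma shifted_coefs_le {d1 d2 d3 d4 d5 : C} {N : R} :
  normc d1 <= N -> normc d2 <= N -> normc d3 <= N -> normc d4 <= N -> normc d5 <= N ->
  \sum_(i < 6) normc (shifted_coefs d1 d2 d3 d4 d5)`_i <= 79%:R * N.
Proof.
move=> *; have := normc_rcX_le1 1; rewrite expr1 => ?.
have := normc_rcX_le1 2; have := normc_rcX_le1 3; have := normc_rcX_le1 4.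
have := normc_rcX_le1 5 => *.
have N0 : 0 <= N by apply: le_trans (normc_ge0 d1) _.
rewrite !big_ord_recr big_ord0 /=.
apply: le_trans; first by normc_sum_bound.
by rewrite !normc_nat; lra.
Qed.

Lemma shifted_coefs_inv_le {d1 d2 d3 d4 d5 : C} {M : R} :
  (forall i, (i < 6)%N -> normc (shifted_coefs d1 d2 d3 d4 d5)`_i <= M) ->
  normc d1 + normc d2 + normc d3 + normc d4 + normc d5 <= 60%:R * M.
Proof.
set c := shifted_coefs d1 d2 d3 d4 d5 => c_le.
(* Undo the shift: [delta = \sum_j c_j (X + rho)^j]. *)
have [-> -> -> -> ->] : [/\ d1 = c`_4 + 5%:R * rc * c`_5, d2 = c`_5,
    d3 = c`_0 + rc * c`_1 + rc ^+ 2 * c`_2 + rc ^+ 3 * c`_3 + rc ^+ 4 * c`_4 + rc ^+ 5 * c`_5,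
    d4 = c`_1 + 2%:R * rc * c`_2 + 3%:R * rc ^+ 2 * c`_3 + 4%:R * rc ^+ 3 * c`_4
         + 5%:R * rc ^+ 4 * c`_5 &
    d5 = c`_2 + 3%:R * rc * c`_3 + 6%:R * rc ^+ 2 * c`_4 + 10%:R * rc ^+ 3 * c`_5
         - 2%:R * (c`_4 + 5%:R * rc * c`_5)].
  by rewrite /c /=; split; ring.
have M0 : 0 <= M by apply: le_trans (normc_ge0 _) (c_le 0%N isT).
move: (c_le 0%N isT) (c_le 1%N isT) (c_le 2%N isT) (c_le 3%N isT) (c_le 4%N isT) (c_le 5%N isT).
have := normc_rcX_le1 1; rewrite expr1.
move: (normc_rcX_le1 2) (normc_rcX_le1 3) (normc_rcX_le1 4) (normc_rcX_le1 5).
clearbody c => *.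
apply: le_trans; first by normc_sum_bound.
by rewrite !normc_nat; lra.
Qed.

End Optimum.

Lemma shifted_pxy_small_roots {R : realType} {d1 d2 d3 d4 d5 : R[i]} :
  norm5 d1 d2 d3 d4 d5 < (100%:R ^+ 7)^-1 ->
  exists2 ts : seq R[i],
    Poly (shifted_coefs d1 d2 d3 d4 d5) = \prod_(t <- ts) ('X - t%:P) & size ts = 6%N /\
    {in ts, forall t, 100%:R * normc t <= 1}.
Proof.
have [d1N d2N d3N d4N d5N] := norm5_ge d1 d2 d3 d4 d5; move=> N_small.
set c := shifted_coefs d1 d2 d3 d4 d5.
have c_seq : Poly c = c :> seq _ by apply: (@PolyK _ 0); rewrite oner_neq0.
have q_monic : Poly c \is monic by rewrite monicE lead_coefE c_seq.
have [ts q_eq] := closed_field_poly_normal (Poly c).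
rewrite (monicP q_monic) scale1r in q_eq; exists ts => //; split.
  by apply: succn_inj; rewrite -(size_prod_XsubC ts id) -q_eq c_seq.
move=> t t_ts; suff : normc t <= 100%:R^-1 by lra.
apply: (normc_root_le _ 6%N _ _ q_monic); first by rewrite c_seq.
- by rewrite invr_ge0 ler0n invf_le1 ?ler1n.
- under eq_bigr do rewrite coef_Poly.
  apply: le_trans (shifted_coefs_le d1N d2N d3N d4N d5N) _.
  have u0 : 0 <= (100%:R ^+ 6 : R)^-1 by rewrite invr_ge0 exprn_ge0.
  by move: N_small; rewrite exprVn exprS invfM; lra.
- by rewrite q_eq root_prod_XsubC.
Qed.

Lemma abscissa_pxy_sharp {R : realType} (x0 x1 y0 y1 y2 : R[i]) :
  let N := norm5 (x0 - x0s R) (x1 - x1s R) (y0 - y0s R) (y1 - y1s R) (y2 - y2s R) in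
  N < (100%:R ^+ 7)^-1 ->
  abscissa (pxy (x0s R) (x1s R) (y0s R) (y1s R) (y2s R)) + (100%:R ^+ 2)^-1 * N
    <= abscissa (pxy x0 x1 y0 y1 y2).
Proof.
set d1 := x0 - x0s R; set d2 := x1 - x1s R; set d3 := y0 - y0s R.
set d4 := y1 - y1s R; set d5 := y2 - y2s R; set p := pxy x0 x1 y0 y1 y2 => N N_small.
have [ts q_eq [size_ts ts_small]] := shifted_pxy_small_roots N_small.
have p_shift : p \Po ('X - rho%:C%:P) = \prod_(t <- ts) ('X - t%:P).
  by rewrite -q_eq -pxy_shift !subrKC.
have p_neq0 : p != 0.
  apply/eqP => p0; move: p_shift; rewrite p0 comp_poly0 => /esym/eqP.
  by rewrite -size_poly_eq0 size_prod_XsubC.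
have ts_Re : {in ts, forall t, complex.Re t <= abscissa p + rho}.
  move=> t t_ts; have : root p (t - rho%:C).
    by rewrite -hornerXsubC -root_comp p_shift root_prod_XsubC.
  by move=> /(Re_le_abscissa _ _ p_neq0); rewrite raddfB /=; lra.
have constraint : let q := \prod_(t <- ts) ('X - t%:P) in
    q`_3 + 4%:R * rho%:C * q`_4 + 4%:R * q`_5 = 0.
  by rewrite /= -q_eq !coef_Poly; apply: shifted_coefs_constraint.
have T_le := small_roots_sqnorm_le rho_bounds size_ts ts_small ts_Re constraint.
set T := \sum_(t <- ts) _ in T_le.
have T0 : 0 <= T by apply: sumr_ge0 => t _; apply: sqr_ge0.
have coef_le i : (i < 6)%N -> normc (shifted_coefs d1 d2 d3 d4 d5)`_i <= 6%:R * T.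
  rewrite -coef_Poly q_eq ltnS leq_eqVlt => /orP[/eqP ->|].
    by have := small_roots_coef5_le rho_bounds size_ts ts_small constraint; rewrite -/T; lra.
  by rewrite ltnS; apply: small_roots_coef_le.
have := shifted_coefs_inv_le coef_le; have := norm5_le d1 d2 d3 d4 d5.
by rewrite abscissa_star -/N -exprVn expr2; lra.
Qed.

Theorem mainTheorem1 (R : realType) :
  (exists eps : R, 0 < eps /\
     forall x0 x1 y0 y1 y2 : R[i],
       norm5 (x0 - x0s R) (x1 - x1s R) (y0 - y0s R) (y1 - y1s R) (y2 - y2s R) < eps ->
       abscissa (pxy (x0s R) (x1s R) (y0s R) (y1s R) (y2s R))
         <= abscissa (pxy x0 x1 y0 y1 y2))
  /\
  (exists tau : R, 0 < tau /\
   exists eps : R, 0 < eps /\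
     forall x0 x1 y0 y1 y2 : R[i],
       norm5 (x0 - x0s R) (x1 - x1s R) (y0 - y0s R) (y1 - y1s R) (y2 - y2s R) < eps ->
       abscissa (pxy (x0s R) (x1s R) (y0s R) (y1s R) (y2s R))
         + tau * norm5 (x0 - x0s R) (x1 - x1s R) (y0 - y0s R) (y1 - y1s R) (y2 - y2s R)
         <= abscissa (pxy x0 x1 y0 y1 y2)).
Proof.
have eps_gt0 : 0 < (100%:R ^+ 7 : R)^-1 by rewrite invr_gt0 exprn_gt0.
have tau_gt0 : 0 < (100%:R ^+ 2 : R)^-1 by rewrite invr_gt0 exprn_gt0.
split.
  exists (100%:R ^+ 7)^-1; split => // x0 x1 y0 y1 y2 /abscissa_pxy_sharp /= sharp.
  apply: le_trans sharp; rewrite lerDl.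
  by apply: mulr_ge0; [exact: ltW | exact: sqrtr_ge0].
exists (100%:R ^+ 2)^-1; split => //; exists (100%:R ^+ 7)^-1; split => //.
exact: abscissa_pxy_sharp.
Qed.
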